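(* Let $p$ be a positive integer, let $\bar J_1,\dots,\bar J_p\in\mathcal{D}(X)$, and let $\bar J(x)=\min_{i=1,\dots,p}\bar J_i(x)$ for all $x\in X$. Then $\bar J\in\mathcal{D}(X)$.
   Context: Setting: $X$ (state space) and $U$ (control space) are sets; for each $x\in X$, $U(x)\subset U$ is nonempty; $f:X\times U\to X$; the stage cost $g$ satisfies $0\le g(x,u)\le\infty$ for all $x\in X$, $u\in U(x)$. $\mathcal{E}^+(X)$ denotes the set of all functions $J:X\to[0,\infty]$. The Bellman operator $T:\mathcal{E}^+(X)\to\mathcal{E}^+(X)$ is $(TJ)(x)=\inf_{u\in U(x)}\{g(x,u)+J(f(x,u))\}$. The region of decreasing is $\mathcal{D}(X)=\{J\in\mathcal{E}^+(X): (TJ)(x)\le J(x)\ \forall x\in X\}$. Standing assumption: for every $J\in\mathcal{E}^+(X)$ and every $x\in X$, the infimum defining $(TJ)(x)$ is attained. *)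

From mathcomp Require Import all_boot all_order all_algebra.
From mathcomp Require Import all_classical all_reals all_analysis.
Set Implicit Arguments. Unset Strict Implicit. Unset Printing Implicit Defensive.
Import Order.TTheory GRing.Theory Num.Theory.
Local Open Scope classical_set_scope.
Local Open Scope ereal_scope.

(* Functions J : X -> [0, +oo], represented as X -> \bar R with J >= 0. *)
Definition nonneg_fun (R : realType) (X : Type) (J : X -> \bar R) : Prop :=
  forall x, 0 <= J x.

Definition bellman (R : realType) (X Uc : Type) (Uset : X -> set Uc)
  (f : X -> Uc -> X) (g : X -> Uc -> \bar R) (J : X -> \bar R) : X -> \bar R :=
  fun x => ereal_inf [set g x u + J (f x u) | u in Uset x].

Definition decreasing_region (R : realType) (X Uc : Type) (Uset : X -> set Uc)
  (f : X -> Uc -> X) (g : X -> Uc -> \bar R) (J : X -> \bar R) : Prop :=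
  nonneg_fun J /\ forall x, bellman Uset f g J x <= J x.

(* T is monotone, so for the pointwise minimum J of the J_i we get
   T J <= T J_i <= J_i for every i, hence T J <= min_i J_i = J. *)
From mathcomp Require Import all_boot all_order all_algebra.
From mathcomp Require Import all_classical all_reals all_analysis.
Import Order.TTheory GRing.Theory Num.Theory.
Local Open Scope classical_set_scope.
Local Open Scope ereal_scope.

Section DecreasingRegion.
Variables (R : realType) (X Uc : Type) (Uset : X -> set Uc).
Variables (f : X -> Uc -> X) (g : X -> Uc -> \bar R).

Lemma le_bellman (J1 J2 : X -> \bar R) :
  (forall y, J1 y <= J2 y) ->
  forall x, bellman Uset f g J1 x <= bellman Uset f g J2 x.
Proof.
move=> le_J x; apply: le_ereal_inf_tmp => _ [u Uu <-].
apply: ge_ereal_inf; exists (g x u + J1 (f x u)); first by exists u.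
exact: leeD2l.
Qed.

Lemma decreasing_region_bigmin (I : eqType) (r : seq I) (P : pred I)
    (J : I -> X -> \bar R) :
  (forall i, P i -> decreasing_region Uset f g (J i)) ->
  decreasing_region Uset f g
    (fun x => \big[Order.min/+oo]_(i <- r | P i) J i x).
Proof.
move=> HJ; split=> x.
  by apply: le_bigmin => // i Pi; exact: (HJ i Pi).1.
rewrite big_seq_cond; apply: le_bigmin => [|i /andP[ri Pi]]; first exact: leey.
apply: le_trans ((HJ i Pi).2 x); apply: le_bellman => y.
exact: ge_bigmin_seq.
Qed.

End DecreasingRegion.

Theorem proposition3 (R : realType) (X Uc : Type) (Uset : X -> set Uc)
  (f : X -> Uc -> X) (g : X -> Uc -> \bar R)
  (HU : forall x, Uset x !=set0)
  (Hg : forall x u, Uset x u -> 0 <= g x u)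
  (Hatt : forall J : X -> \bar R, nonneg_fun J -> forall x,
     exists2 u, Uset x u & bellman Uset f g J x = g x u + J (f x u))
  (p : nat) (Hp : (0 < p)%N) (Jb : 'I_p -> X -> \bar R)
  (HJ : forall i, decreasing_region Uset f g (Jb i)) :
  decreasing_region Uset f g (fun x => \big[Order.min/+oo]_(i < p) Jb i x).
Proof. exact: decreasing_region_bigmin. Qed.
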